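(* Let $G$ be an abelian group. Fix an imaginary unit $\hat I\in\mathbb{H}$ and identify the circle group $\mathbb{T}$ with the unit circle of $\mathbb{C}_{\hat I}$, so that $\widehat G=\mathrm{Hom}(G,\mathbb{T})\subseteq G^\delta$. The following are equivalent: (i) $\widehat G=G^\delta$; (ii) every $\phi\in\mathcal{P}^{\mathbb{H}}_*(G)$ is real-valued; (iii) $G$ has exponent $\le 2$, i.e. $2g=0$ for all $g\in G$.
   Context: $\mathbb{H}$ is the real quaternion algebra, $\mathbb{S}=\{q\in\mathbb{H}:|q|=1\}$. An imaginary unit is $I\in\mathbb{H}$ with $\mathrm{Re}\,I=0$, $|I|=1$; $\mathbb{C}_I=\mathbb{R}\oplus I\mathbb{R}$. For an abelian group $G$, $\phi:G\to\mathbb{H}$ is positive definite if for all $k$, $g_i\in G$, $q_i\in\mathbb{H}$, $\sum_{i,j=1}^k\overline{q_i}\,\phi(g_j-g_i)\,q_j$ is a nonnegative real number; $\mathcal{P}^{\mathbb{H}}_*(G)$ is the set of such $\phi$ with $\phi(0)=1$. $G^\delta=\mathrm{Hom}(G,\mathbb{S})$. *)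

From HB Require Import structures.
From mathcomp Require Import all_boot all_order all_algebra.
From mathcomp Require Import reals.
Set Implicit Arguments. Unset Strict Implicit. Unset Printing Implicit Defensive.
Import Order.TTheory GRing.Theory Num.Theory.
Local Open Scope ring_scope.

Section Quat.
Variable R : realType.

(* The real quaternion algebra H: q = q0 + q1 i + q2 j + q3 k. *)
Record quat := Quat { q0 : R; q1 : R; q2 : R; q3 : R }.

Definition qone : quat := Quat 1 0 0 0.

Definition qmul (a b : quat) : quat :=
  Quat (q0 a * q0 b - q1 a * q1 b - q2 a * q2 b - q3 a * q3 b)
       (q0 a * q1 b + q1 a * q0 b + q2 a * q3 b - q3 a * q2 b)
       (q0 a * q2 b - q1 a * q3 b + q2 a * q0 b + q3 a * q1 b)
       (q0 a * q3 b + q1 a * q2 b - q2 a * q1 b + q3 a * q0 b).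

Definition qconj (a : quat) : quat := Quat (q0 a) (- q1 a) (- q2 a) (- q3 a).

Definition qnorm2 (a : quat) : R := q0 a ^+ 2 + q1 a ^+ 2 + q2 a ^+ 2 + q3 a ^+ 2.

Definition qreal (a : quat) : Prop := q1 a = 0 /\ q2 a = 0 /\ q3 a = 0.

Definition imag_unit (I : quat) : Prop := q0 I = 0 /\ qnorm2 I = 1.

Definition in_CI (I x : quat) : Prop :=
  exists a b : R, x = Quat a (b * q1 I) (b * q2 I) (b * q3 I).

Variable G : zmodType.

(* phi : G -> H positive definite: for every k, g_i, q_i the sum
   sum_{i,j} conj(q_i) phi(g_j - g_i) q_j is a nonnegative real number.
   The quaternion sum is taken componentwise. *)
Definition pd_term (phi : G -> quat) k (g : 'I_k -> G) (q : 'I_k -> quat)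
  (i j : 'I_k) : quat :=
  qmul (qmul (qconj (q i)) (phi (g j - g i))) (q j).

Definition pos_def (phi : G -> quat) : Prop :=
  forall (k : nat) (g : 'I_k -> G) (q : 'I_k -> quat),
    [/\ \sum_(i < k) \sum_(j < k) q1 (pd_term phi g q i j) = 0,
        \sum_(i < k) \sum_(j < k) q2 (pd_term phi g q i j) = 0,
        \sum_(i < k) \sum_(j < k) q3 (pd_term phi g q i j) = 0 &
        0 <= \sum_(i < k) \sum_(j < k) q0 (pd_term phi g q i j)].

Definition PH_star (phi : G -> quat) : Prop := pos_def phi /\ phi 0 = qone.

Definition Gdelta (f : G -> quat) : Prop :=
  (forall a b : G, f (a + b) = qmul (f a) (f b)) /\ (forall a, qnorm2 (f a) = 1).

Definition Ghat (I : quat) (f : G -> quat) : Prop :=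
  Gdelta f /\ forall a, in_CI I (f a).

End Quat.

From HB Require Import structures.
From mathcomp Require Import all_boot all_order all_algebra.
From mathcomp Require Import reals boolp classical_sets complex ring lra zify.
Set Implicit Arguments. Unset Strict Implicit. Unset Printing Implicit Defensive.
Import Order.TTheory GRing.Theory Num.Theory.
Local Open Scope ring_scope.
Local Open Scope classical_set_scope.

(* (iii) => (ii), (i): if 2g = 0 for all g, a positive definite phi tested
   on the pair (0, g) has phi g + phi (-g) = 2 phi g real; and every
   character f : G -> S satisfies f(g)^2 = f(2g) = 1, so f(g) = +-1 lies in
   every C_I.
   (i), (ii) => (iii): if 2g != 0 we build a character psi of G into the unit
   circle of C with psi g not real.  This is the injectivity of the divisible
   group C^x: partial characters (graphs of homomorphisms from subgroups of
   G to C^x) extend one cyclic step at a time, using m-th roots in C, and by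
   Zorn's lemma to all of G.  Sending the circle into a complex line C_J of H
   transverse to C_I gives an element of G^delta outside \hat G, and since
   characters are positive definite (their Gram sums are |sum_i f(g_i) q_i|^2),
   a positive definite function that is not real-valued. *)

Section Quaternions.
Variable R : realType.
Implicit Types a b c : quat R.

Lemma qmulA a b c : qmul (qmul a b) c = qmul a (qmul b c).
Proof. by case: a b c => ???? [????] [????]; congr Quat; rewrite /=; ring. Qed.

Lemma qmul1q a : qmul (qone R) a = a.
Proof. by case: a => ????; congr Quat; rewrite /=; ring. Qed.

Lemma qmulq1 a : qmul a (qone R) = a.
Proof. by case: a => ????; congr Quat; rewrite /=; ring. Qed.

Lemma qconj1 : qconj (qone R) = qone R.
Proof. by rewrite /qconj /= oppr0. Qed.

Lemma qconjM a b : qconj (qmul a b) = qmul (qconj b) (qconj a).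
Proof. by case: a b => ???? [????]; congr Quat; rewrite /=; ring. Qed.

Lemma qconj_unit a :
  qnorm2 a = 1 -> qmul (qconj a) a = qone R /\ qmul a (qconj a) = qone R.
Proof.
case: a => a0 a1 a2 a3; rewrite /qnorm2 /= => n1.
by split; congr Quat; rewrite /=; first [ring | rewrite -n1; ring].
Qed.

Lemma unit_sqr1_real a : qnorm2 a = 1 -> qmul a a = qone R -> qreal a.
Proof.
case: a => a0 a1 a2 a3; rewrite /qnorm2 /qreal /= => n1 [e0 _ _ _].
have s0 : a1 ^+ 2 + a2 ^+ 2 + a3 ^+ 2 = 0 by rewrite -!expr2 in e0; lra.
have := sqr_ge0 a1; have := sqr_ge0 a2; have := sqr_ge0 a3 => h3 h2 h1.
by do !split; apply/eqP; rewrite /= -sqrf_eq0; apply/eqP; lra.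
Qed.

Definition qsum {k} (v : 'I_k -> quat R) : quat R :=
  Quat (\sum_i q0 (v i)) (\sum_i q1 (v i)) (\sum_i q2 (v i)) (\sum_i q3 (v i)).

(* The Gram sum  sum_{i,j} conj(v_i) v_j  equals  conj(V) V = |V|^2,
   V = sum_i v_i: it is real and nonnegative. *)
Lemma gram_sum k (v : 'I_k -> quat R) :
  [/\ \sum_i \sum_j q1 (qmul (qconj (v i)) (v j)) = 0,
      \sum_i \sum_j q2 (qmul (qconj (v i)) (v j)) = 0,
      \sum_i \sum_j q3 (qmul (qconj (v i)) (v j)) = 0 &
      \sum_i \sum_j q0 (qmul (qconj (v i)) (v j)) = qnorm2 (qsum v)].
Proof.
split; under eq_bigr => i _ do under eq_bigr => j _ do rewrite /= !mulNr ?opprK;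
  under eq_bigr => i _ do rewrite !big_split /= ?sumrN -!mulr_sumr;
  by rewrite !big_split /= ?sumrN -!mulr_suml /qnorm2 /=; ring.
Qed.

End Quaternions.

Section Characters.
Variables (R : realType) (G : zmodType).
Implicit Types (f : G -> quat R) (x y : G).

(* A character fixes 0: f 0 is an idempotent unit quaternion. *)
Lemma Gdelta0 f : Gdelta f -> f 0 = qone R.
Proof.
move=> [fD fN]; have [f0K _] := qconj_unit (fN 0).
have f00 : f 0 = qmul (f 0) (f 0) by rewrite -fD addr0.
by rewrite -[LHS]qmul1q -f0K qmulA -f00.
Qed.

Lemma GdeltaB f x y : Gdelta f -> f (y - x) = qmul (qconj (f x)) (f y).
Proof.
move=> fG; have [fD fN] := fG; rewrite addrC fD; congr qmul.
have [_ fxK] := qconj_unit (fN x).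
have fNx : qmul (f (- x)) (f x) = qone R by rewrite -fD addNr Gdelta0.
by rewrite -[LHS]qmulq1 -fxK -qmulA fNx qmul1q.
Qed.

(* Every character G -> S is a normalized positive definite function:
   its Gram form is conj(V) V with V = sum_i f(g_i) q_i. *)
Lemma Gdelta_PH_star f : Gdelta f -> PH_star f.
Proof.
move=> fG; split; last exact: Gdelta0.
move=> k g q; pose v i := qmul (f (g i)) (q i).
have -> : pd_term f g q = fun i j => qmul (qconj (v i)) (v j).
  by apply/funext => i; apply/funext => j; rewrite /pd_term GdeltaB // qconjM !qmulA.
have [s1 s2 s3 s0] := gram_sum v; split => //.
by rewrite s0 /qnorm2 !addr_ge0 ?sqr_ge0.
Qed.

Hypothesis exp2 : forall x : G, x + x = 0.

(* In exponent 2, testing positive definiteness on the pair (0, x) with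
   coefficients 1 forces phi x + phi (-x) = phi x + phi x to be real. *)
Lemma exp2_PH_star_real (phi : G -> quat R) : PH_star phi -> forall x, qreal (phi x).
Proof.
move=> [phiP phi0] x.
have Nx : - x = x by apply/eqP; rewrite eq_sym -addr_eq0 exp2.
have [e1 e2 e3 _] := phiP 2 (fun i => x *+ i) (fun _ => qone R).
move: e1 e2 e3; rewrite !big_ord_recl !big_ord0 /pd_term qconj1 !qmulq1 !qmul1q /=.
rewrite /bump /= !mulr0n !mulr1n !subrr subr0 sub0r Nx phi0 /=.
by move=> e1 e2 e3; do !split; lra.
Qed.

(* In exponent 2 every character squares to 1, so it is real and lies in
   every C_I. *)
Lemma exp2_Gdelta_Ghat (I : quat R) f : Gdelta f -> Ghat I f.
Proof.
move=> fG; split=> // a.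
have fa2 : qmul (f a) (f a) = qone R by rewrite -fG.1 exp2 Gdelta0.
have [r1 [r2 r3]] := unit_sqr1_real (fG.2 a) fa2.
exists (q0 (f a)), 0; move: r1 r2 r3; case: (f a) => ???? /= -> -> ->.
by rewrite !mul0r.
Qed.

End Characters.

Lemma int_subgroup (S : int -> Prop) :
  S 0 -> (forall a b, S a -> S b -> S (a - b)) ->
  (forall k, S k -> k = 0) \/
  exists2 m : nat, (0 < m)%N & S m /\ forall k, S k -> (m %| k)%Z.
Proof.
move=> S0 SB.
have SN k : S k -> S (- k) by move=> Sk; rewrite -sub0r; apply: SB.
have SD a b : S a -> S b -> S (a + b).
  by move=> Sa Sb; rewrite -[b]opprK; apply: SB => //; apply: SN.
have SM a q : S a -> S (q * a).
  move=> Sa; have Sn n : S (n%:Z * a).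
    by elim: n => [|n IH]; rewrite ?mul0r // intS mulrDl mul1r; apply: SD.
  by case: q => n; rewrite ?NegzE ?mulNr //; apply: SN.
have [[k [k0 Sk]]|triv] := pselect (exists k, k != 0 /\ S k); last first.
  by left=> k Sk; apply/eqP; apply: contra_notT triv => k0; exists k.
right; have Sk_abs : S `|k|%N.
  by rewrite abszE; case: (lerP 0 k) => hk; [rewrite ger0_norm | rewrite ltr0_norm //; apply: SN].
have Pex : exists n, (0 < n)%N && `[< S n >].
  by exists `|k|%N; rewrite absz_gt0 k0; apply/asboolP.
case: (ex_minnP Pex) => m /andP[m0 /asboolP Sm] m_min.
exists m => //; split=> // j Sj; apply/dvdz_mod0P.
have m0' : (m : int) != 0 by rewrite eqz_nat -lt0n.
have Sr : S (j %% m)%Z.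
  have -> : (j %% m)%Z = j - (j %/ m)%Z * m by have := divz_eq j m; lia.
  by apply: SB => //; apply: SM.
have [r Er] : exists r : nat, (j %% m)%Z = r by exists `|(j %% m)%Z|%N; rewrite gez0_abs ?modz_ge0.
have rm : (r < m)%N by rewrite -ltz_nat -Er ltz_pmod // ltz_nat.
rewrite Er; apply/eqP; rewrite eqz_nat; apply: contraTT rm => r0.
by rewrite -leqNgt m_min // lt0n r0 /=; apply/asboolP; rewrite -Er.
Qed.

Section PartialCharacters.
Variables (R : realType) (G : zmodType).
Implicit Types (A B : G -> R[i] -> Prop) (a b x : G) (z w : R[i]).

(* A partial character of G is the graph of a homomorphism from a subgroup
   of G to the multiplicative group R[i]^x, i.e. a subgroup of G x R[i]^x
   that is a functional relation. *)
Definition partial_char A : Prop :=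
  [/\ A 0 1, (forall a b z w, A a z -> A b w -> A (a - b) (z / w)),
      (forall a z, A a z -> z != 0) & (forall a z w, A a z -> A a w -> z = w)].

Definition graph_le A B : Prop := forall a z, A a z -> B a z.

Section OnePartialChar.
Variables (A : G -> R[i] -> Prop) (pA : partial_char A).

Lemma pcharV a z : A a z -> A (- a) z^-1.
Proof. by case: pA => A01 AB _ _ Az; rewrite -sub0r -div1r; apply: AB. Qed.

Lemma pcharM a b z w : A a z -> A b w -> A (a + b) (z * w).
Proof.
case: pA => _ AB _ _ Az Bw.
by rewrite -[b]opprK -[w]invrK; apply: AB => //; apply: pcharV.
Qed.

Lemma pcharX a z k : A a z -> A (a *~ k) (z ^ k).
Proof.
move=> Az; have An n : A (a *+ n) (z ^+ n).
  by elim: n => [|n IH]; [case: pA | rewrite mulrSr exprSr; apply: pcharM].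
case: k => n; first exact: An.
by rewrite NegzE mulrNz -exprnN; apply: pcharV; apply: An.
Qed.

(* On the cyclic subgroup generated by x, A is given by the powers of a
   single nonzero w: this uses that R[i] contains all m-th roots. *)
Lemma pchar_cyclic_root x :
  exists2 w, w != 0 & forall k z, A (x *~ k) z -> z = w ^ k.
Proof.
have [A01 AB Anz Afun] := pA.
pose S k := exists z, A (x *~ k) z.
have [||Striv|[m m0 [[zm Azm] Sdvd]]] := @int_subgroup S.
- by exists 1; rewrite mulr0z.
- move=> k l [z Az] [w Aw]; exists (z / w); rewrite mulrzBr; exact: AB.
- exists 1 => [|k z Az]; first exact: oner_neq0.
  have k0 : k = 0 by apply: Striv; exists z.
  by move: Az; rewrite k0 mulr0z expr0z => Az; apply: Afun Az A01.
exists (m.-root zm) => [|k z Az]; first by rewrite rootC_eq0 // (Anz _ _ Azm).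
have /dvdzP[q kqm] := Sdvd k (ex_intro _ z Az); rewrite kqm in Az *.
have wm : m.-root zm ^ (m : int) = zm := rootCK m0 zm.
rewrite mulrC -exprz_exp wm; apply: Afun Az _.
by rewrite mulrC mulrzA; apply: pcharX.
Qed.

Definition pchar_adjoin x w a z : Prop :=
  exists h y (k : int), [/\ A h y, a = h + x *~ k & z = y * w ^ k].

Lemma pchar_adjoinP x w : w != 0 -> (forall k z, A (x *~ k) z -> z = w ^ k) ->
  [/\ partial_char (pchar_adjoin x w), graph_le A (pchar_adjoin x w)
    & pchar_adjoin x w x w].
Proof.
move=> w0 wA; have [A01 AB Anz _] := pA.
split; last 2 first.
- by move=> a z Az; exists a, z, 0; rewrite mulr0z addr0 expr0z mulr1.
- by exists 0, 1, 1; rewrite mulr1z add0r mul1r expr1z.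
split.
- by exists 0, 1, 0; rewrite mulr0z addr0 expr0z mulr1.
- move=> _ _ _ _ [h [y [k [Ay -> ->]]]] [h' [y' [k' [Ay' -> ->]]]] /=.
  exists (h - h'), (y / y'), (k - k'); split; first exact: AB.
    by rewrite mulrzBr opprD addrACA.
  by rewrite expfzDr // -invr_expz invfM mulrACA.
- move=> a z [h [y [k [Ay _ ->]]]] /=.
  by rewrite mulf_neq0 ?expfz_neq0 ?(Anz _ _ Ay).
- move=> a z z' [h [y [k [Ay -> ->]]]] [h' [y' [k' [Ay' E ->]]]] /=.
  have Ed : h = h' + x *~ (k' - k) by rewrite mulrzBr addrA -E addrK.
  have := AB _ _ _ _ Ay Ay'; rewrite Ed [h' + _]addrC addrK => /wA ew.
  by rewrite -[y](divfK (Anz _ _ Ay')) ew mulrAC -expfzDr // subrK mulrC.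
Qed.

End OnePartialChar.

(* The union of a nonempty chain of partial characters is one: any two
   points of the union already lie in a common member of the chain. *)
Lemma pchar_chain_union (F : set (G -> R[i] -> Prop)) :
  F !=set0 -> (forall B, F B -> partial_char B) -> total_on F graph_le ->
  partial_char (fun a z => exists2 B, F B & B a z).
Proof.
move=> [B0 FB0] Fp Ftot.
have common B B' a z b w : F B -> F B' -> B a z -> B' b w ->
    exists2 C, F C & C a z /\ C b w.
  move=> FB FB' Baz B'bw; have [le|le] := Ftot _ _ FB FB'.
  - by exists B' => //; split=> //; apply: le.
  - by exists B => //; split=> //; apply: le.
split.
- by exists B0 => //; case: (Fp _ FB0).
- move=> a b z w [B FB Baz] [B' FB' B'bw].
  have [C FC [Caz Cbw]] := common _ _ _ _ _ _ FB FB' Baz B'bw.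
  by exists C => //; case: (Fp _ FC) => _ CB _ _; apply: CB.
- by move=> a z [B FB Baz]; case: (Fp _ FB) => _ _ Bnz _; apply: Bnz Baz.
- move=> a z w [B FB Baz] [B' FB' B'aw].
  have [C FC [Caz Caw]] := common _ _ _ _ _ _ FB FB' Baz B'aw.
  by case: (Fp _ FC) => _ _ _ Cfun; apply: Cfun Caz Caw.
Qed.

(* A partial character admitting no proper extension is defined
   everywhere, since any point can be adjoined. *)
Lemma pchar_maximal_total B : partial_char B ->
  (forall B', partial_char B' -> graph_le B B' -> graph_le B' B) ->
  forall y, exists z, B y z.
Proof.
move=> pB Bmax y; have [w w0 wB] := pchar_cyclic_root pB y.
have [pB' BB' B'yw] := pchar_adjoinP pB w0 wB.
by exists w; apply: Bmax B'yw.
Qed.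

Lemma pchar_function B : partial_char B -> (forall y, exists z, B y z) ->
  exists chi : G -> R[i], [/\ forall a b, chi (a + b) = chi a * chi b,
    forall a, chi a != 0 & forall a, B a (chi a)].
Proof.
move=> pB Btot; have [_ _ Bnz Bfun] := pB.
pose chi y := projT1 (cid (Btot y)).
have Bchi a : B a (chi a) by rewrite /chi; case: cid.
exists chi; split=> // [a b|a]; last exact: Bnz (Bchi a).
exact: Bfun (Bchi _) (pcharM pB (Bchi a) (Bchi b)).
Qed.

(* R[i]^x is a divisible group, hence injective: every partial character
   extends to a character of G (Zorn's lemma). *)
Lemma pchar_extend A : partial_char A ->
  exists chi : G -> R[i], [/\ forall a b, chi (a + b) = chi a * chi b,
    forall a, chi a != 0 & forall a z, A a z -> chi a = z].
Proof.
move=> pA; pose T := {B | partial_char B /\ graph_le A B}.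
pose tA : T := exist _ A (conj pA (fun _ _ => id)).
pose le (s t : T) := `[< graph_le (sval s) (sval t) >].
have [t tmax] : exists t, premaximal le t.
  apply: (@ZL_preorder T tA le).
  - by move=> s; apply/asboolP.
  - by move=> r s u /asboolP rs /asboolP su; apply/asboolP => a z /rs /su.
  - move=> Ch Chtot; have [[s0 Chs0]|Ch0] := pselect (Ch !=set0); last first.
      by exists tA => s Chs; exfalso; apply: Ch0; exists s.
    pose F := [set sval s | s in Ch].
    have Fp B : F B -> partial_char B by case=> s _ <-; case: (svalP s).
    have Ftot : total_on F graph_le.
      move=> _ _ [s Chs <-] [u Chu <-].
      by case: (Chtot _ _ Chs Chu) => /asboolP; [left|right].
    pose U a z := exists2 B, F B & B a z.
    have pU : partial_char U := pchar_chain_union (ex_intro _ _ (imageP sval Chs0)) Fp Ftot.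
    have AU : graph_le A U.
      by move=> a z Aaz; exists (sval s0); [exact: imageP | case: (svalP s0) => _; apply].
    exists (exist _ U (conj pU AU)) => s Chs; apply/asboolP => a z Baz /=.
    by exists (sval s) => //; exact: imageP.
have [pB AB] := svalP t.
have Btot : forall y, exists z, sval t y z.
  apply: pchar_maximal_total => // B' pB' BB'.
  have AB' : graph_le A B' by move=> a z /AB /BB'.
  by apply/asboolP; apply: (tmax (exist _ B' (conj pB' AB'))); apply/asboolP.
have [chi [chiM chi0 Bchi]] := pchar_function pB Btot.
exists chi; split=> // a z /AB Baz.
by case: pB => _ _ _ Bfun; apply: Bfun (Bchi a) Baz.
Qed.

(* If x0 != 0 there is a unit complex number w0 != 1 with w0 ^ k = 1
   whenever x0 *~ k = 0: -1 if x0 has infinite order, and a nontrivial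
   m-th root of unity if x0 has order m > 1. *)
Lemma nontrivial_unit_root x0 : x0 != 0 ->
  exists w0 : R[i], [/\ `|w0| = 1, w0 != 1 & forall k, x0 *~ k = 0 -> w0 ^ k = 1].
Proof.
move=> x00; pose S k := x0 *~ k = 0.
have [||Striv|[m m0 [Sm Sdvd]]] := @int_subgroup S.
- exact: mulr0z.
- by move=> k l Sk Sl; rewrite /S mulrzBr Sk Sl subrr.
- exists (-1); split=> [||k /Striv ->]; rewrite ?normrN ?normr1 ?expr0z //.
  by apply/eqP => /(congr1 (@complex.Re R)) /=; lra.
have m1 : m != 1%N by apply: contraNneq x00 => m1; rewrite -Sm m1 mulr1z.
pose p : {poly R[i]} := \poly_(i < m) 1.
have sp : size p = m by rewrite size_poly_eq // oner_neq0.
have [w /rootP] : exists w, root p w by apply/closed_rootP; rewrite sp.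
rewrite horner_poly => sum_w.
have sum_pow : \sum_(i < m) w ^+ i = 0.
  by rewrite -[RHS]sum_w; apply: eq_bigr => i _; rewrite mul1r.
have wm : w ^+ m = 1 by apply/eqP; rewrite -subr_eq0 subrX1 sum_pow mulr0.
exists w; split.
- by apply/eqP; rewrite -(pexpr_eq1 m0) ?normr_ge0 // -normrX wm normr1.
- apply: contra_eqN sum_pow => /eqP ->.
  by rewrite (eq_bigr (fun=> 1)) => [|i _]; rewrite ?expr1n // sumr_const card_ord pnatr_eq0 -lt0n.
- move=> k /Sdvd /dvdzP[q ->].
  by rewrite mulrC -exprz_exp; have -> : w ^ (m : int) = 1 := wm; rewrite exp1rz.
Qed.

(* If 2g != 0 there is a character of G into the unit circle of R[i] that
   is not real at g: extend x0 = 2g |-> w0 as above, then normalize. *)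
Lemma unit_character_nonreal g : g + g != 0 ->
  exists psi : G -> R[i], [/\ forall a b, psi (a + b) = psi a * psi b,
    forall a, `|psi a| = 1 & complex.Im (psi g) != 0].
Proof.
move=> g2; have [w0 [w0n w01 w0k]] := nontrivial_unit_root g2.
have w00 : w0 != 0 by rewrite -normr_eq0 w0n oner_neq0.
pose A0 a z := a = 0 /\ z = 1.
have pA0 : partial_char A0.
  split=> [|a b z w [-> ->] [-> ->]|a z [_ ->]|a z w [_ ->] [_ ->]] //.
  - by rewrite subrr divr1.
  - exact: oner_neq0.
have compat k z : A0 ((g + g) *~ k) z -> z = w0 ^ k by move=> [/w0k -> ->].
have [pA1 _ A1w] := pchar_adjoinP pA0 w00 compat.
have [chi [chiM chi0 chiA1]] := pchar_extend pA1.
pose psi a := chi a / `|chi a|.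
have psiM a b : psi (a + b) = psi a * psi b by rewrite /psi chiM normrM invfM mulrACA.
have psin a : `|psi a| = 1 by rewrite normrM normfV normr_id mulfV // normr_eq0.
exists psi; split=> //; apply: contra_neq w01 => Im0.
have psi2 : psi (g + g) = w0 by rewrite /psi (chiA1 _ _ A1w) w0n divr1.
rewrite -psi2 psiM; move: (psin g) Im0; case: (psi g) => r s /= nr s0; subst s.
have r2 : r ^+ 2 = 1.
  by have := congr1 (@complex.Re R) (add_Re2_Im2 (Complex r 0)); rewrite nr /=; lra.
by apply/eqP; rewrite eq_complex /= !mulr0 mul0r subr0 addr0 -expr2 r2 !eqxx.
Qed.

End PartialCharacters.

Section ComplexLines.
Variable R : realType.

Definition quat_of_complex (J : quat R) (z : R[i]) : quat R :=
  Quat (complex.Re z) (complex.Im z * q1 J) (complex.Im z * q2 J) (complex.Im z * q3 J).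

(* It is multiplicative since J^2 = -1, and preserves the norm. *)
Lemma quat_of_complexM J z w : imag_unit J ->
  quat_of_complex J (z * w) = qmul (quat_of_complex J z) (quat_of_complex J w).
Proof.
case: J => j0 j1 j2 j3 [/= -> nJ]; case: z w => a b [c d].
rewrite /qnorm2 /= expr0n add0r in nJ; congr Quat; rewrite /=; try ring.
apply/eqP; rewrite -subr_eq0; apply/eqP.
by transitivity (b * d * (j1 ^+ 2 + j2 ^+ 2 + j3 ^+ 2 - 1)); [ring | rewrite nJ subrr mulr0].
Qed.

Lemma qnorm2_quat_of_complex J z : imag_unit J -> `|z| = 1 ->
  qnorm2 (quat_of_complex J z) = 1.
Proof.
case: J => j0 j1 j2 j3 [/= -> nJ] zn.
have := congr1 (@complex.Re R) (add_Re2_Im2 z); rewrite zn /= => e.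
rewrite /qnorm2 /= expr0n add0r in nJ; rewrite /qnorm2 /=.
transitivity (complex.Re z ^+ 2 + complex.Im z ^+ 2 * (j1 ^+ 2 + j2 ^+ 2 + j3 ^+ 2)).
  by ring.
by rewrite nJ mulr1; lra.
Qed.

Lemma Gdelta_quat_of_complex (G : zmodType) J (psi : G -> R[i]) : imag_unit J ->
  (forall a b, psi (a + b) = psi a * psi b) -> (forall a, `|psi a| = 1) ->
  Gdelta (fun a => quat_of_complex J (psi a)).
Proof.
move=> iJ psiM psin; split=> [a b|a]; first by rewrite psiM quat_of_complexM.
exact: qnorm2_quat_of_complex.
Qed.

Lemma imag_unit_i : imag_unit (Quat 0 1 0 0 : quat R).
Proof. by split=> //; rewrite /qnorm2 /= expr1n !expr0n /= !addr0 add0r. Qed.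

(* For every I there is an imaginary unit J whose complex line meets C_I
   only in R: i if I is orthogonal to i, and j otherwise. *)
Lemma transverse_unit (I : quat R) : exists2 J, imag_unit J &
  forall z, in_CI I (quat_of_complex J z) -> complex.Im z = 0.
Proof.
have [I1|I1] := eqVneq (q1 I) 0.
  exists (Quat 0 1 0 0) => [|z [a [b [_ e1 _ _]]]]; first exact: imag_unit_i.
  by move: e1; rewrite /= mulr1 I1 mulr0.
exists (Quat 0 0 1 0) => [|z [a [b [_ e1 e2 _]]]].
  by split=> //; rewrite /qnorm2 /= expr1n !expr0n /= !addr0 !add0r.
move: e1 e2; rewrite /= !mulr0 mulr1 => /esym/eqP; rewrite mulf_eq0 (negbTE I1) orbF.
by move=> /eqP -> ->; rewrite mul0r.
Qed.

End ComplexLines.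

(* (i) => (iii): if 2g != 0, a character psi with psi g nonreal, read in
   a complex line transverse to C_I, lies in G^delta but not in \hat G. *)
Lemma exp2_of_Gdelta_Ghat (R : realType) (G : zmodType) (I : quat R) :
  (forall f : G -> quat R, Gdelta f <-> Ghat I f) -> forall g : G, g + g = 0.
Proof.
move=> GdeltaE g; apply/eqP; apply: contraT => g2.
have [psi [psiM psin Impsi]] := @unit_character_nonreal R G g g2.
have [J iJ JI] := transverse_unit I.
have [_ fCI] := (GdeltaE _).1 (Gdelta_quat_of_complex iJ psiM psin).
by rewrite (JI _ (fCI g)) eqxx in Impsi.
Qed.

(* (ii) => (iii): the same character, viewed in C_i, is positive definite
   but not real at g. *)
Lemma exp2_of_PH_star_real (R : realType) (G : zmodType) :
  (forall phi : G -> quat R, PH_star phi -> forall g, qreal (phi g)) ->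
  forall g : G, g + g = 0.
Proof.
move=> PHreal g; apply/eqP; apply: contraT => g2.
have [psi [psiM psin Impsi]] := @unit_character_nonreal R G g g2.
have fG := Gdelta_quat_of_complex (imag_unit_i R) psiM psin.
have [Im0 _] := PHreal _ (Gdelta_PH_star fG) g.
by rewrite /= mulr1 in Im0; rewrite Im0 eqxx in Impsi.
Qed.

Theorem mainTheorem14 (R : realType) (G : zmodType) (I : quat R) :
  imag_unit I ->
  ((forall f : G -> quat R, Gdelta f <-> Ghat I f) <->
   (forall phi : G -> quat R, PH_star phi -> forall g, qreal (phi g))) /\
  ((forall phi : G -> quat R, PH_star phi -> forall g, qreal (phi g)) <->
   (forall g : G, g + g = 0)).
Proof.
move=> _.
have iii_ii := @exp2_PH_star_real R G.
have ii_iii := @exp2_of_PH_star_real R G.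
have i_iii := @exp2_of_Gdelta_Ghat R G I.
have iii_i : (forall g : G, g + g = 0) -> forall f : G -> quat R, Gdelta f <-> Ghat I f.
  by move=> exp2 f; split; [exact: exp2_Gdelta_Ghat | case].
split; split.
- by move=> /i_iii/iii_ii.
- by move=> /ii_iii/iii_i.
- exact: ii_iii.
- exact: iii_ii.
Qed.
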